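(* Let $\Xi\subseteq\mathbb{R}^{n_\xi}$, let $q$ be a random vector in $\mathbb{R}^{n_q}$ with probability distribution $\mathsf{Pr}_q$ and support $\mathbb{Q}$, and let $F:\mathbb{R}^{n_q}\to\mathbb{R}^{p\times n_\xi}$ and $g:\mathbb{R}^{n_q}\to\mathbb{R}^{p}$ be continuous. For $\varepsilon\in(0,1)$ define the chance-constrained set $$\mathbb{X}_\varepsilon=\bigl\{\xi\in\Xi \;:\; \mathsf{Pr}_q\{F(q)\xi\le g(q)\}\ge 1-\varepsilon\bigr\}$$ (inequalities between vectors are componentwise). Let $x_c\in\mathbb{R}^{n_\xi}$ and $\underline{\mathbb{S}}\subseteq\mathbb{R}^{n_\xi}$ be given, and for $\gamma\ge 0$ let $\underline{\mathbb{S}}(\gamma)=x_c\oplus\gamma\underline{\mathbb{S}}=\{x_c+\gamma s: s\in\underline{\mathbb{S}}\}$. Assume $x_c\in\mathbb{X}_\varepsilon$. Let $\delta\in(0,1)$, choose an integer $N_\gamma\ge \frac{7.67}{\varepsilon}\ln\frac{1}{\delta}$ and set $r=\lceil \varepsilon N_\gamma/2\rceil$. Draw $N_\gamma$ i.i.d. samples $q^{(1)},\dots,q^{(N_\gamma)}$ from $\mathsf{Pr}_q$, and for each $i$ let $\mathbb{X}_i=\{\xi\in\Xi: F(q^{(i)})\xi\le g(q^{(i)})\}$ and $\gamma_i=\max\{\gamma : \underline{\mathbb{S}}(\gamma)\subseteq\mathbb{X}_i\}$. Let $\gamma$ be the $r$-th smallest value among $\gamma_1,\dots,\gamma_{N_\gamma}$.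 Then, with probability at least $1-\delta$ (with respect to the samples $q^{(1)},\dots,q^{(N_\gamma)}$), $\underline{\mathbb{S}}(\gamma)\subseteq\mathbb{X}_\varepsilon$.
   Context: This is the guarantee for the ''probabilistic scaling'' procedure (Algorithm 1 of the paper): a candidate set $\underline{\mathbb{S}}$ (a ''simple approximating set'') centered at $x_c$ is scaled around $x_c$ by the factor $\gamma$ computed from sampled constraints as described in the claim. *)

From HB Require Import structures.
From mathcomp Require Import all_boot all_order all_algebra.
From mathcomp Require Import all_classical all_reals all_analysis.
Set Implicit Arguments. Unset Strict Implicit. Unset Printing Implicit Defensive.
Import Order.TTheory GRing.Theory Num.Theory.
Import numFieldNormedType.Exports.
Local Open Scope classical_set_scope.
Local Open Scope ring_scope.

Definition borelRV (R : realType) (n : nat) := g_sigma_algebraType (@open 'rV[R]_n).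

Definition mxle (R : realType) (m n : nat) (A B : 'M[R]_(m, n)) : Prop :=
  forall i j, A i j <= B i j.

Definition Xq (R : realType) (nxi nq p : nat) (Xi : set 'cV[R]_nxi)
  (F : 'rV[R]_nq -> 'M[R]_(p, nxi)) (g : 'rV[R]_nq -> 'cV[R]_p)
  (q : 'rV[R]_nq) : set 'cV[R]_nxi :=
  [set xi | Xi xi /\ mxle (F q *m xi) (g q)].

Definition Xeps (R : realType) (nxi nq p : nat) (Xi : set 'cV[R]_nxi)
  (Prq : probability (borelRV R nq) R)
  (F : 'rV[R]_nq -> 'M[R]_(p, nxi)) (g : 'rV[R]_nq -> 'cV[R]_p)
  (eps : R) : set 'cV[R]_nxi :=
  [set xi | Xi xi /\
            ((1 - eps)%:E <= Prq [set q : borelRV R nq | mxle (F q *m xi) (g q)])%E].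

Definition Sgam (R : realType) (nxi : nat) (xc : 'cV[R]_nxi) (S : set 'cV[R]_nxi)
  (gam : R) : set 'cV[R]_nxi :=
  (fun s => xc + gam *: s) @` S.

Definition gamma_set (R : realType) (nxi nq p : nat) (Xi : set 'cV[R]_nxi)
  (F : 'rV[R]_nq -> 'M[R]_(p, nxi)) (g : 'rV[R]_nq -> 'cV[R]_p)
  (xc : 'cV[R]_nxi) (S : set 'cV[R]_nxi) (q : 'rV[R]_nq) : set R :=
  [set gam | 0 <= gam /\ Sgam xc S gam `<=` Xq Xi F g q].

(* gam = max { gamma >= 0 : S(gamma) subset X(q) }, with the convention
   gam = 0 when this set is empty. *)
Definition is_gamma_of (R : realType) (nxi nq p : nat) (Xi : set 'cV[R]_nxi)
  (F : 'rV[R]_nq -> 'M[R]_(p, nxi)) (g : 'rV[R]_nq -> 'cV[R]_p)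
  (xc : 'cV[R]_nxi) (S : set 'cV[R]_nxi) (q : 'rV[R]_nq) (gam : R) : Prop :=
  (gamma_set Xi F g xc S q = set0 /\ gam = 0) \/
  (gamma_set Xi F g xc S q gam /\
     forall gam', gamma_set Xi F g xc S q gam' -> gam' <= gam).

(* r-th smallest (r >= 1) value among gam_0, ..., gam_{N-1} *)
Definition rth_smallest (R : realType) (N : nat) (gam : 'I_N -> R) (r : nat) : R :=
  nth 0 (sort <=%R [seq gam i | i <- enum 'I_N]) r.-1.

Definition mutually_independent d (Omega : measurableType d) (R : realType)
  (P : probability Omega R) d' (V : measurableType d') (n : nat)
  (X : 'I_n -> Omega -> V) : Prop :=
  forall A : 'I_n -> set V, (forall i, measurable (A i)) ->
    P (\bigcap_(i in [set: 'I_n]) (X i @^-1` A i)) =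
    (\prod_(i < n) P (X i @^-1` A i))%E.

(* For t >= 0 let A(t) ([scaled_sat t]) be the set of parameters q for which
   every point of the scaled set S(t) satisfies F(q) x <= g(q).  As 0 is in S,
   q in A(t) puts xc and xc + t s in the convex set {x | F(q) x <= g(q)}, so A
   is nonincreasing.  Call t unreliable when Pr(A(t)) < 1 - eps and let C be
   the complement of the union of the A(t) over unreliable t; approaching the
   infimum of the unreliable scalings from above and using continuity of the
   measure gives Pr(C) >= eps.  If gamma, the r-th smallest gamma_i, were
   unreliable, each sample in C would satisfy gamma_i < gamma (otherwise q_i
   lies in A(gamma_i), a subset of A(gamma)), and at most r - 1 samples do; so
   as soon as r samples fall in C, gamma is reliable and S(gamma) is contained
   in X_eps.  The number of samples in C is binomial with success probability
   at least eps, and its lower tail below r is at most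
   2^(r-1) (1 - eps/2)^N <= delta for the prescribed N and r. *)

From HB Require Import structures.
From mathcomp Require Import all_boot all_order all_algebra.
From mathcomp Require Import all_classical all_reals all_analysis.
From mathcomp Require Import ring lra.
Import Order.TTheory GRing.Theory Num.Theory.
Import numFieldNormedType.Exports.
Local Open Scope classical_set_scope.
Local Open Scope ring_scope.
Set Implicit Arguments. Unset Strict Implicit. Unset Printing Implicit Defensive.

Section order_statistics.
Variables (R : realType) (N : nat) (gam : 'I_N -> R).

Lemma rth_smallest_mem r : (r.-1 < N)%N -> exists j, rth_smallest gam r = gam j.
Proof.
move=> rN; rewrite /rth_smallest.
set s := sort _ _; have size_s : size s = N by rewrite size_sort size_map size_enum_ord.
have : nth 0 s r.-1 \in [seq gam i | i <- enum 'I_N].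
  by rewrite -(mem_sort <=%R) mem_nth ?size_s.
by case/mapP => j _ ->; exists j.
Qed.

Lemma card_lt_rth_smallest r :
  (#|[set i | (gam i < rth_smallest gam r)%R]%SET| <= r.-1)%N.
Proof.
rewrite /rth_smallest; set s := sort _ _; set x := nth 0 s r.-1.
have s_sorted : sorted <=%R s by apply: sort_sorted; exact: le_total.
have -> : #|[set i | (gam i < x)%R]%SET| = count (fun i => gam i < x) (enum 'I_N).
  by rewrite -sum1dep_card -big_filter sum1_size size_filter enumT.
rewrite -(count_map gam (< x)) -(permP (permEl (perm_sort <=%R _))) -/s.
rewrite -(cat_take_drop r.-1 s) count_cat.
have -> : count (< x) (drop r.-1 s) = 0%N.
  apply/eqP; rewrite -leqn0 leqNgt -has_count; apply/hasPn => y /(nthP 0) [k hk <-].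
  rewrite size_drop ltn_subRL in hk.
  rewrite nth_drop -leNgt; apply: (sorted_leq_nth le_trans lexx 0 s_sorted) => //.
    by rewrite inE (leq_ltn_trans (leq_addr k _)).
  exact: leq_addr.
by rewrite addn0 (leq_trans (count_size _ _)) // size_take; case: ltnP.
Qed.

End order_statistics.

Section binomial_sums.
Variables (R : comNzRingType) (N : nat).

Lemma sum_ffun_prod_bool (a b : R) :
  \sum_(f : {ffun 'I_N -> bool}) \prod_i (if f i then a else b) = (a + b) ^+ N.
Proof.
rewrite -(bigA_distr_bigA (fun (i : 'I_N) (j : bool) => if j then a else b)) /=.
by under eq_bigr do rewrite big_bool /=; rewrite prodr_const card_ord.
Qed.

Lemma prod_bool_scale (f : {ffun 'I_N -> bool}) (a b c : R) :
  \prod_i (if f i then c * a else b) =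
  c ^+ #|[set i | f i]%SET| * \prod_i (if f i then a else b).
Proof.
rewrite (eq_bigr (fun i => (if f i then c else 1) * (if f i then a else b))).
  by rewrite big_split /= -big_mkcond prodr_const cardsE.
by move=> i _; case: (f i); rewrite ?mul1r.
Qed.

End binomial_sums.

Lemma binomial_lower_tail_le (R : realFieldType) (N r : nat) (p : R) :
  0 <= p <= 1 ->
  \sum_(f : {ffun 'I_N -> bool} | (#|[set i | f i]%SET| < r)%N)
     \prod_i (if f i then p else 1 - p) <= 2 ^+ r.-1 * (1 - p / 2) ^+ N.
Proof.
move=> /andP[p0 p1].
have -> : 1 - p / 2 = 2^-1 * p + (1 - p) by field.
have prod_ge0 (a : R) (f : {ffun 'I_N -> bool}) :
    0 <= a -> 0 <= \prod_i (if f i then a else 1 - p).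
  by move=> a0; apply: prodr_ge0 => i _; case: (f i); lra.
rewrite -(sum_ffun_prod_bool N (2^-1 * p)) mulr_sumr.
rewrite [leRHS](bigID (fun f : {ffun 'I_N -> bool} => #|[set i | f i]%SET| < r)%N) /=.
apply: ler_wpDr.
  by apply: sumr_ge0 => f _; apply: mulr_ge0; [apply: exprn_ge0 | apply: prod_ge0]; lra.
apply: ler_sum => f /= small_f; rewrite prod_bool_scale mulrA.
(* 2^(r-1) (1/2)^k = 2^(r-1-k) >= 1 for the k < r successes of f *)
set k := #|_|; have k_le : (k <= r.-1)%N by rewrite -ltnS prednK // (leq_ltn_trans _ small_f).
rewrite -[leLHS]mul1r ler_wpM2r ?prod_ge0 // -(subnK k_le) exprD -mulrA -exprMn.
rewrite mulfV ?expr1n ?mulr1 //.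
by rewrite exprn_ege1 // ler1n.
Qed.

Lemma ln2_le (R : realType) : ln (2 : R) <= 147 / 200.
Proof.
set t : R := 1 + 147 / 1600.
have sq_le (a x : R) : 0 <= a <= x -> a ^+ 2 <= x ^+ 2.
  by case/andP => a0 ax; rewrite lerXn2r ?nnegrE // (le_trans a0).
have t2 : 1192 / 1000 <= t ^+ 2 by rewrite expr2 /t; lra.
have t4 : 142 / 100 <= t ^+ 4.
  rewrite (exprM t 2 2); apply: (le_trans _ (sq_le (1192 / 1000) _ _)).
    by rewrite expr2; lra.
  by rewrite t2 andbT; lra.
have t8 : 2 <= t ^+ 8.
  rewrite (exprM t 4 2); apply: (le_trans _ (sq_le (142 / 100) _ _)).
    by rewrite expr2; lra.
  by rewrite t4 andbT; lra.
rewrite -ler_expR lnK ?posrE //.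
apply: (le_trans t8).
have -> : (147 / 200 : R) = 8%:R * (147 / 1600) by lra.
rewrite expRM_natl lerXn2r ?nnegrE ?expR_ge0 ?expR_ge1Dx //.
rewrite /t; lra.
Qed.

Lemma binomial_lower_tail_le_delta (R : realType) (N r : nat) (p eps delta : R) :
  0 < eps -> eps <= p <= 1 -> 0 < delta ->
  767 / 100 / eps * ln (1 / delta) <= N%:R -> (r.-1)%:R <= eps * N%:R / 2 ->
  \sum_(f : {ffun 'I_N -> bool} | (#|[set i | f i]%SET| < r)%N)
     \prod_i (if f i then p else 1 - p) <= delta.
Proof.
move=> eps0 /andP[eps_p p1] delta0 HN Hr.
apply: le_trans (binomial_lower_tail_le _ _ _) _; first by apply/andP; split; lra.
set L := ln (1 / delta).
have eN0 : 0 <= eps * N%:R by rewrite mulr_ge0 ?ler0n ?ltW.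
have eN_ge : 767 / 100 * L <= eps * N%:R.
  by rewrite -(ler_pM2l eps0) mulrCA mulrA divfK ?gt_eqF // in HN *; rewrite mulrC.
(* ln 2 <= 0.735 is what makes 7.67 enough: 7.67 (1 - 0.735) / 2 > 1. *)
have ln2_bound : (r.-1)%:R * ln 2 <= eps * N%:R / 2 * (147 / 200).
  by rewrite ler_pM ?ler0n ?ln2_le // ln_ge0 //; lra.
have half_bound : 1 - p / 2 <= expR (- (eps / 2)) by apply: le_trans (expR_ge1Dx _); lra.
apply: (@le_trans _ _ (expR ((r.-1)%:R * ln 2) * expR (N%:R * - (eps / 2)))).
  rewrite !expRM_natl lnK ?posrE //; apply: ler_wpM2l; first exact: exprn_ge0.
  by rewrite lerXn2r ?nnegrE ?expR_ge0 //; lra.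
rewrite -expRD -[leRHS]lnK ?posrE // ler_expR.
have -> : ln delta = - L by rewrite /L div1r lnV ?opprK ?posrE.
lra.
Qed.

Lemma abs_ceil_bounds (R : realType) (x : R) (N : nat) : 0 < x -> x <= N%:R ->
  (0 < `|Num.ceil x|%N <= N)%N /\ (`|Num.ceil x|%N.-1)%:R <= x.
Proof.
move=> x_gt0 x_le; set r := `|Num.ceil x|%N.
have r_eq : r%:Z = Num.ceil x by rewrite abszE gtr0_norm ?ceil_gt0.
have r_gt0 : (0 < r)%N by rewrite -ltz_nat r_eq ceil_gt0.
have rR : r%:R = (Num.ceil x)%:~R :> R by rewrite -r_eq.
split; first by rewrite r_gt0 -lez_nat r_eq ceil_le_int.
have := ceilB1_lt x; rewrite intrB -rR -[r](prednK r_gt0) -natr1; lra.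
Qed.

Lemma sample_rank_bounds (R : realType) (N : nat) (eps delta : R) :
  0 < eps -> eps < 1 -> 0 < delta -> delta < 1 ->
  767 / 100 / eps * ln (1 / delta) <= N%:R ->
  let r := `|Num.ceil (eps * N%:R / 2)|%N in
  (0 < r <= N)%N /\ (r.-1)%:R <= eps * N%:R / 2.
Proof.
move=> eps_gt0 eps_lt1 delta_gt0 delta_lt1 HN r.
have N_gt0 : 0 < N%:R :> R.
  apply: lt_le_trans HN; apply: mulr_gt0; first by apply: divr_gt0; lra.
  by apply: ln_gt0; rewrite ltr_pdivlMr // mul1r.
have eN_le : eps * N%:R <= N%:R by apply: ler_piMl; [exact: ler0n | exact: ltW].
by apply: abs_ceil_bounds; [apply: divr_gt0 => //; exact: mulr_gt0 | lra].
Qed.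

Section independent_trials.
Context (R : realType) d (Omega : measurableType d) (P : probability Omega R).
Context d' (V : measurableType d') (Q : probability V R) (N : nat).
Variable X : 'I_N -> Omega -> V.
Hypothesis mX : forall i, measurable_fun [set: Omega] (X i).
Hypothesis X_Q : forall i A, measurable A -> P (X i @^-1` A) = Q A.
Hypothesis X_indep : mutually_independent P X.
Variable C : set V.
Hypothesis mC : measurable C.

Let p := fine (Q C).
Let outcome w : {ffun 'I_N -> bool} := [ffun i => `[< C (X i w) >]].
Let cell (f : {ffun 'I_N -> bool}) : set Omega :=
  \bigcap_(i in [set: 'I_N]) X i @^-1` (if f i then C else ~` C).

Let cellE f w : cell f w <-> outcome w = f.
Proof.
split => [cell_w | <- i _]; last by rewrite /= ffunE; case: asboolP.
apply/ffunP => i; rewrite ffunE; have := cell_w i I.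
by case: (f i) => /= Ci; [exact/asboolP | exact/asboolPn].
Qed.

Let measurable_cell f : measurable (cell f).
Proof.
apply: fin_bigcap_measurable; first exact: finite_finset.
move=> i _; rewrite -[X in measurable X]setTI; apply: mX => //.
by case: (f i) => //; exact: measurableC.
Qed.

Let Q_C : Q C = p%:E.
Proof. by rewrite fineK // fin_num_measure. Qed.

Let measure_cell f : P (cell f) = (\prod_i (if f i then p else 1 - p))%:E.
Proof.
rewrite /cell X_indep => [|i]; last by case: (f i) => //; exact: measurableC.
rewrite -prodEFin; apply: eq_bigr => i _; rewrite X_Q; last first.
  by case: (f i) => //; exact: measurableC.
by case: (f i); rewrite ?probability_setC // Q_C.
Qed.

Let count_ge_bigcup r :
  [set w | (r <= #|[set i | `[< C (X i w) >] ]%SET|)%N] =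
  \bigcup_(f in [set f : {ffun 'I_N -> bool} | (r <= #|[set i | f i]%SET|)%N]) cell f.
Proof.
apply/seteqP; split => w /=.
  move=> r_le; exists (outcome w); last exact/cellE.
  by rewrite /=; under eq_finset do rewrite ffunE.
move=> [f /= + /cellE out_w]; rewrite -out_w.
by under eq_finset do rewrite ffunE.
Qed.

Lemma measurable_count_ge r :
  measurable [set w | (r <= #|[set i | `[< C (X i w) >] ]%SET|)%N].
Proof.
by rewrite count_ge_bigcup; apply: fin_bigcup_measurable.
Qed.

Lemma measure_count_ge r :
  P [set w | (r <= #|[set i | `[< C (X i w) >] ]%SET|)%N] =
  (\sum_(f : {ffun 'I_N -> bool} | (r <= #|[set i | f i]%SET|)%N)
      \prod_i (if f i then p else 1 - p))%:E.
Proof.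
rewrite count_ge_bigcup measure_fin_bigcup //; last 2 first.
- exact: finite_finset.
- by move=> f g _ _ [w [/cellE <- /cellE]].
rewrite -sumEFin [RHS]bigfs; last 2 first.
- exact: index_enum_uniq.
- by move=> f _; rewrite mem_index_enum.
by apply: eq_fsbigr => f _; exact: measure_cell.
Qed.

Lemma measure_count_ge_ge r (eps delta : R) :
  0 < eps -> (eps%:E <= Q C)%E -> 0 < delta ->
  767 / 100 / eps * ln (1 / delta) <= N%:R -> (r.-1)%:R <= eps * N%:R / 2 ->
  ((1 - delta)%:E <= P [set w | (r <= #|[set i | `[< C (X i w) >] ]%SET|)%N])%E.
Proof.
move=> eps0 eps_QC delta0 HN Hr; rewrite measure_count_ge lee_fin.
have p_bounds : eps <= p <= 1.
  by rewrite -!lee_fin -Q_C eps_QC probability_le1.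
have := binomial_lower_tail_le_delta eps0 p_bounds delta0 HN Hr.
have := sum_ffun_prod_bool N p (1 - p).
rewrite subrKC expr1n (bigID (fun f : {ffun 'I_N -> bool} => #|[set i | f i]%SET| < r)%N) /=.
under [X in _ + X = _]eq_bigl do rewrite -leqNgt.
lra.
Qed.

End independent_trials.

Definition unreliable d (T : measurableType d) (R : realType)
    (mu : set T -> \bar R) (A : R -> set T) (c : \bar R) : set R :=
  [set t | 0 <= t /\ (mu (A t) < c)%E].

Section unreliable_union.
Context d (T : measurableType d) (R : realType) (mu : {measure set T -> \bar R}).
Variables (A : R -> set T) (c : \bar R).
Hypothesis mA : forall t, measurable (A t).
Hypothesis A_anti : forall s t, 0 <= s -> s <= t -> A t `<=` A s.

Local Notation U := (unreliable mu A c).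

Lemma unreliable_le s t : U s -> s <= t -> U t.
Proof.
move=> [s0 mu_s] st; split; first exact: le_trans st.
by apply: le_lt_trans mu_s; apply: le_measure; rewrite ?inE //; exact: A_anti.
Qed.

Lemma bigcup_unreliable_seq : U !=set0 ->
  exists b : nat -> R, [/\ forall n, U (b n),
    {homo (A \o b) : n m / (n <= m)%N >-> (n <= m)%O} &
    \bigcup_(t in U) A t = \bigcup_n A (b n)].
Proof.
move=> U_n0; set t0 := inf U.
have U_ge0 : lbound U 0 by move=> t [].
have has_inf_U : has_inf U by split => //; exists 0.
have t0_ge0 : 0 <= t0 by exact: lb_le_inf.
have t0_le t : U t -> t0 <= t by move=> Ut; apply: ge_inf => //; exists 0.
have [Ut0 | nUt0] := pselect (U t0).
  exists (fun=> t0); split => //.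
  apply/seteqP; split=> [x [t Ut] | x [_ _]]; last by exists t0.
  by exists 0%N => //; apply: (A_anti t0_ge0 (t0_le t Ut)).
have U_b n : U (t0 + n.+1%:R^-1).
  have inv_gt0 : 0 < n.+1%:R^-1 :> R by rewrite invr_gt0 ltr0n.
  have [t Ut t_lt] := inf_adherent inv_gt0 has_inf_U.
  exact: unreliable_le Ut (ltW t_lt).
have b_ge0 n : 0 <= t0 + n.+1%:R^-1 by rewrite addr_ge0 // invr_ge0.
exists (fun n => t0 + n.+1%:R^-1); split => //.
- move=> n m nm; apply/subsetPset; apply: A_anti => //.
  by rewrite lerD2l lef_pV2 ?posrE ?ltr0n // ler_nat ltnS.
apply/seteqP; split=> [x [t Ut Atx] | x [n _]]; last first.
  by exists (t0 + n.+1%:R^-1).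
have t0_lt : t0 < t.
  by rewrite lt_neqAle t0_le // andbT; apply: contraPneq nUt0 => ->.
have [n t_gt] := ltr_add_invr t0_lt.
by exists n => //; apply: (A_anti (b_ge0 n) (ltW t_gt)).
Qed.

Lemma measurable_bigcup_unreliable : measurable (\bigcup_(t in U) A t).
Proof.
have [U_n0 | /nonemptyPn ->] := pselect (U !=set0); last by rewrite bigcup_set0.
have [b [_ _ ->]] := bigcup_unreliable_seq U_n0.
by apply: bigcupT_measurable => n; exact: mA.
Qed.

Lemma measure_bigcup_unreliable_le : (0 <= c)%E -> (mu (\bigcup_(t in U) A t) <= c)%E.
Proof.
move=> c0; have [U_n0 | /nonemptyPn ->] := pselect (U !=set0); last first.
  by rewrite bigcup_set0 measure0.
have [b [Ub Ab_homo ->]] := bigcup_unreliable_seq U_n0.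
have mAb : measurable (\bigcup_n A (b n)) by apply: bigcupT_measurable => n; exact: mA.
rewrite -(cvg_lim _ (nondecreasing_cvg_mu (fun n => mA (b n)) mAb Ab_homo)) //.
apply: lime_le; first by apply/cvg_ex; eexists; exact: nondecreasing_cvg_mu.
by apply: nearW => n; apply: ltW; exact: (Ub n).2.
Qed.

End unreliable_union.

Lemma probability_setC_bigcup_unreliable d (T : measurableType d) (R : realType)
    (P : probability T R) (A : R -> set T) (eps : R) :
  (forall t, measurable (A t)) ->
  (forall s t, 0 <= s -> s <= t -> A t `<=` A s) -> eps <= 1 ->
  (eps%:E <= P (~` \bigcup_(t in unreliable P A (1 - eps)%:E) A t))%E.
Proof.
move=> mA A_anti eps_le1; set U := \bigcup_(t in _) A t.
have mU : measurable U by exact: measurable_bigcup_unreliable.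
have PU_le : (P U <= (1 - eps)%:E)%E.
  by apply: measure_bigcup_unreliable_le; rewrite // lee_fin subr_ge0.
have PU_fin : P U \is a fin_num by exact: fin_num_measure.
rewrite probability_setC // -(fineK PU_fin) -EFinB lee_fin.
by rewrite -(fineK PU_fin) lee_fin in PU_le; lra.
Qed.

Section constraint_closed.
Context {R : realType} {T : topologicalType}.

Lemma continuous_mxE m n (M : T -> 'M[R]_(m, n)) i j :
  continuous M -> continuous (fun q => M q i j).
Proof.
by move=> M_cont q; exact: continuous_comp (M_cont q) (@coord_continuous R _ _ i j (M q)).
Qed.

Lemma continuous_mulmxE m n k (M : T -> 'M[R]_(m, n)) (B : 'M[R]_(n, k)) i j :
  continuous M -> continuous (fun q => (M q *m B) i j).
Proof.
move=> M_cont; under eq_fun do rewrite mxE.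
apply: (continuous_big (op := +%R) add_continuous) => l _ q.
by apply: continuousM; [exact: continuous_mxE | exact: cst_continuous].
Qed.

Lemma closed_mxle m n (M N : T -> 'M[R]_(m, n)) :
  (forall i j, continuous (fun q => M q i j)) ->
  (forall i j, continuous (fun q => N q i j)) ->
  closed [set q | mxle (M q) (N q)].
Proof.
move=> M_cont N_cont.
have -> : [set q | mxle (M q) (N q)] =
    \bigcap_(i in [set: 'I_m]) \bigcap_(j in [set: 'I_n])
      ((fun q => N q i j - M q i j) @^-1` [set x | 0 <= x]).
  apply/seteqP; split => q /= q_le => [i _ j _ | i j].
    by rewrite /preimage /= subr_ge0; exact: q_le.
  by rewrite -subr_ge0; exact: q_le.
apply: closed_bigI => i _; apply: closed_bigI => j _.
have diff_cont : continuous (fun q => N q i j - M q i j).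
  by move=> q; exact: (continuousB (N_cont i j q) (M_cont i j q)).
exact: (continuous_closedP _).1 diff_cont _ (@closed_ge R 0).
Qed.

End constraint_closed.

Lemma measurable_closed_rV (R : realType) n (A : set (borelRV R n)) :
  closed (A : set 'rV[R]_n) -> measurable A.
Proof.
move=> A_closed; rewrite -(setCK A); apply: measurableC.
by apply: sub_sigma_algebra; exact: closed_openC.
Qed.

Lemma mulmx_affineE (R : comNzRingType) m n k (M : 'M[R]_(m, n)) (x v : 'M[R]_(n, k))
    (t : R) i j :
  (M *m (x + t *: v)) i j = (M *m x) i j + t * (M *m v) i j.
Proof. by rewrite mulmxDr -scalemxAr !mxE. Qed.

Section scaled_set.
Variables (R : realType) (nxi nq p : nat) (Xi : set 'cV[R]_nxi).
Variables (F : 'rV[R]_nq -> 'M[R]_(p, nxi)) (g : 'rV[R]_nq -> 'cV[R]_p).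
Variables (xc : 'cV[R]_nxi) (S : set 'cV[R]_nxi).

Definition scaled_sat (t : R) : set (borelRV R nq) :=
  \bigcap_(s in S) [set q | mxle (F q *m (xc + t *: s)) (g q)].

Lemma scaled_sat_anti s t : S 0 -> 0 <= s -> s <= t -> scaled_sat t `<=` scaled_sat s.
Proof.
move=> S0 s0 st q q_t v Sv i j; have := q_t v Sv i j; have := q_t 0 S0 i j.
rewrite scaler0 addr0 !mulmx_affineE.
have [v_ge0 | v_lt0] := leP 0 ((F q *m v) i j).
  by have := ler_wpM2r v_ge0 st; lra.
by have := mulr_ge0_le0 s0 (ltW v_lt0); lra.
Qed.

Lemma measurable_scaled_sat t : continuous F -> continuous g ->
  measurable (scaled_sat t).
Proof.
move=> F_cont g_cont; apply: measurable_closed_rV; apply: closed_bigI => s _.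
apply: closed_mxle => i j; last exact: continuous_mxE.
exact: continuous_mulmxE.
Qed.

Lemma gamma_set_scaled_sat q t : gamma_set Xi F g xc S q t -> scaled_sat t q.
Proof. by move=> [_ St_sub] s Ss; have [] := St_sub _ (ex_intro2 _ _ s Ss erefl). Qed.

Lemma is_gamma_of_ge0 q t : is_gamma_of Xi F g xc S q t -> 0 <= t.
Proof. by case=> [[_ ->] | [[]]]. Qed.

Lemma is_gamma_of_gt0 q t :
  is_gamma_of Xi F g xc S q t -> 0 < t -> gamma_set Xi F g xc S q t.
Proof. by case=> [[_ ->] | [] //]; rewrite ltxx. Qed.

End scaled_set.

Section rth_smallest_scaling.
Variables (R : realType) (nxi nq p : nat) (Xi : set 'cV[R]_nxi).
Variables (F : 'rV[R]_nq -> 'M[R]_(p, nxi)) (g : 'rV[R]_nq -> 'cV[R]_p).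
Hypotheses (F_cont : continuous F) (g_cont : continuous g).
Variables (xc : 'cV[R]_nxi) (S : set 'cV[R]_nxi) (Prq : probability (borelRV R nq) R).
Variable eps : R.
Hypotheses (S0 : S 0) (xc_Xeps : Xeps Xi Prq F g eps xc).

Local Notation U := (unreliable Prq (scaled_sat F g xc S) (1 - eps)%:E).

Lemma Sgam_rth_smallest_sub_Xeps N (q : 'I_N -> 'rV[R]_nq) (gam : 'I_N -> R) r :
  (0 < r <= N)%N ->
  (forall i, is_gamma_of Xi F g xc S (q i) (gam i)) ->
  (r <= #|[set i | `[< (~` \bigcup_(t in U) scaled_sat F g xc S t) (q i) >] ]%SET|)%N ->
  Sgam xc S (rth_smallest gam r) `<=` Xeps Xi Prq F g eps.
Proof.
move=> /andP[r_gt0 r_le] gam_of r_le_out; set t := rth_smallest gam r.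
have [j t_j] : exists j, t = gam j.
  by apply: rth_smallest_mem; rewrite prednK.
have := is_gamma_of_ge0 (gam_of j); rewrite -t_j le_eqVlt => /predU1P[t_eq0 | t_gt0].
  by rewrite -t_eq0 => _ [s _ <-]; rewrite scale0r addr0.
have t_gamma : gamma_set Xi F g xc S (q j) t.
  by rewrite t_j; apply: is_gamma_of_gt0 (gam_of j) _; rewrite -t_j.
have t_reliable : ~ U t.
  move=> Ut; have := card_lt_rth_smallest gam r; apply/negP; rewrite -ltnNge.
  rewrite prednK // (leq_trans r_le_out) //; apply/subset_leq_card/fintype.subsetP => i.
  rewrite !inE => out_i; rewrite ltNge; apply/negP => t_le; apply: out_i.
  exists t => //; apply: (scaled_sat_anti S0 (ltW t_gt0) t_le).
  exact/gamma_set_scaled_sat/(is_gamma_of_gt0 (gam_of i))/(lt_le_trans t_gt0 t_le).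
move=> _ [s Ss <-]; split; first by have [] := t_gamma.2 _ (ex_intro2 _ _ s Ss erefl).
have : ((1 - eps)%:E <= Prq (scaled_sat F g xc S t))%E.
  by rewrite leNgt; apply/negP => lt_t; apply: t_reliable; split; first exact: ltW.
move/le_trans; apply; apply: le_measure; rewrite ?inE.
- exact: measurable_scaled_sat.
- by apply: measurable_closed_rV; apply: closed_mxle => i k;
    [exact: continuous_mulmxE | exact: continuous_mxE].
- by move=> q' sat_q'; exact: sat_q' s Ss.
Qed.

End rth_smallest_scaling.

Unset Implicit Arguments.
Theorem lemma1 (R : realType) (nxi nq p : nat)
  (Xi : set 'cV[R]_nxi)
  (Prq : probability (borelRV R nq) R)
  (F : 'rV[R]_nq -> 'M[R]_(p, nxi)) (g : 'rV[R]_nq -> 'cV[R]_p)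
  (HF : continuous F) (Hg : continuous g)
  (eps : R) (Heps0 : 0 < eps) (Heps1 : eps < 1)
  (xc : 'cV[R]_nxi) (S : set 'cV[R]_nxi) (HS0 : S 0)
  (Hxc : Xeps Xi Prq F g eps xc)
  (delta : R) (Hdelta0 : 0 < delta) (Hdelta1 : delta < 1)
  (Ngam : nat) (HN : 767 / 100 / eps * ln (1 / delta) <= Ngam%:R)
  (d : measure_display) (Omega : measurableType d) (P : probability Omega R)
  (qs : 'I_Ngam -> Omega -> borelRV R nq)
  (Hqs_meas : forall i, measurable_fun [set: Omega] (qs i))
  (Hqs_dist : forall i (A : set (borelRV R nq)), measurable A ->
                 P (qs i @^-1` A) = Prq A)
  (Hqs_indep : mutually_independent P qs) :
  let r := `|Num.ceil (eps * Ngam%:R / 2)|%N in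
  exists E : set Omega, measurable E /\ ((1 - delta)%:E <= P E)%E /\
    forall w, E w ->
      forall gam : 'I_Ngam -> R,
        (forall i, is_gamma_of Xi F g xc S (qs i w) (gam i)) ->
        Sgam xc S (rth_smallest gam r) `<=` Xeps Xi Prq F g eps.
Proof.
move=> r; have [r_bounds r_le] := sample_rank_bounds Heps0 Heps1 Hdelta0 Hdelta1 HN.
set U := \bigcup_(t in unreliable Prq (scaled_sat F g xc S) (1 - eps)%:E)
           scaled_sat F g xc S t.
have sat_meas t : measurable (scaled_sat F g xc S t) by exact: measurable_scaled_sat.
have sat_anti s t : 0 <= s -> s <= t -> scaled_sat F g xc S t `<=` scaled_sat F g xc S s.
  exact: scaled_sat_anti.
have mCU : measurable (~` U) by apply: measurableC; exact: measurable_bigcup_unreliable.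
have eps_le : (eps%:E <= Prq (~` U))%E.
  by apply: probability_setC_bigcup_unreliable => //; exact: ltW.
exists [set w | (r <= #|[set i | `[< (~` U) (qs i w) >] ]%SET|)%N]; split.
  exact: (measurable_count_ge Hqs_meas mCU).
split.
  exact: (measure_count_ge_ge Hqs_meas Hqs_dist Hqs_indep mCU Heps0 eps_le Hdelta0 HN r_le).
move=> w r_le_w gam gam_of.
exact: (Sgam_rth_smallest_sub_Xeps HF Hg HS0 Hxc r_bounds gam_of r_le_w).
Qed.
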